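(* Let $\mathcal X$ be a separable metric space with at least two points, $\Omega=\mathcal X^{\mathbb N}$ with the product topology, and $\Sigma$ a $\sigma$-algebra on $\Omega$ containing all open sets. For every finitely additive probability $P$ on $(\Omega,\Sigma)$ there exists a strongly nonatomic finitely additive probability $\widetilde P$ on $(\Omega,\Sigma)$ such that $P(U)\le\widetilde P(U)$ for every open set $U\subseteq\Omega$.
   Context: A finitely additive probability $P$ on $(\Omega,\Sigma)$ is strongly nonatomic if for every $E\in\Sigma$ and $\alpha\in[0,1]$ there is $F\in\Sigma$ with $F\subseteq E$ and $P(F)=\alpha P(E)$. *)

From Stdlib Require Import Reals List.
Open Scope R_scope.

Definition is_metric {X : Type} (d : X -> X -> R) : Prop :=
  (forall x y, 0 <= d x y) /\
  (forall x y, d x y = 0 <-> x = y) /\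
  (forall x y, d x y = d y x) /\
  (forall x y z, d x z <= d x y + d y z).

(* Separable: has a countable dense subset (X is nonempty in our use). *)
Definition separable {X : Type} (d : X -> X -> R) : Prop :=
  exists s : nat -> X, forall x eps, 0 < eps -> exists n, d x (s n) < eps.

Definition metric_open {X : Type} (d : X -> X -> R) (V : X -> Prop) : Prop :=
  forall x, V x -> exists eps, 0 < eps /\ forall y, d x y < eps -> V y.

(* Open sets of Omega = X^N with the product topology: every point of U has a
   basic open neighbourhood  prod_{i in F} V_i x prod_{i notin F} X  inside U,
   with F finite and each V_i open in X. *)
Definition product_open {X : Type} (d : X -> X -> R) (U : (nat -> X) -> Prop)
  : Prop :=
  forall w, U w ->
    exists (F : list nat) (V : nat -> X -> Prop),
      (forall i, metric_open d (V i)) /\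
      (forall i, In i F -> V i (w i)) /\
      (forall w', (forall i, In i F -> V i (w' i)) -> U w').

Definition sigma_algebra {Om : Type} (S : (Om -> Prop) -> Prop) : Prop :=
  S (fun _ => True) /\
  (forall A, S A -> S (fun w => ~ A w)) /\
  (forall A : nat -> Om -> Prop, (forall n, S (A n)) ->
     S (fun w => exists n, A n w)).

Definition fa_probability {Om : Type} (S : (Om -> Prop) -> Prop)
  (P : (Om -> Prop) -> R) : Prop :=
  (forall A, S A -> 0 <= P A) /\
  P (fun _ => True) = 1 /\
  (forall A B, S A -> S B -> (forall w, A w -> B w -> False) ->
     P (fun w => A w \/ B w) = P A + P B).

Definition strongly_nonatomic {Om : Type} (S : (Om -> Prop) -> Prop)
  (P : (Om -> Prop) -> R) : Prop :=
  forall E alpha, S E -> 0 <= alpha <= 1 ->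
    exists F, S F /\ (forall w, F w -> E w) /\ P F = alpha * P E.

From Stdlib Require Import Reals List Lia Lra.
From Stdlib Require Import Classical FunctionalExtensionality PropExtensionality ClassicalEpsilon.
From mathcomp Require all_boot classical_sets boolp filter.
Open Scope R_scope.

(* Fix [a <> b] and code [m] by the pattern "[b] at position [2m], [a] afterwards". Every
   [x] is the limit of its probes [probe x m] (the first [m] coordinates of [x] followed by
   the code of [m]), and probes with distinct [m] lie in disjoint closed sets. Given a finite
   measurable partition of Omega with a point chosen in each cell, spread the [P]-mass of each
   cell uniformly over the first [n+1] probes of its point; the new probability is an
   ultrafilter limit of these discrete probabilities, along partitions that decide any given
   measurable set and along [n -> oo]. A closed set [K] gets at most [P K] in the limit, since
   the probes of a point outside [K] eventually leave [K]; this is the domination on open sets.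
   Grouping the codes by [m mod k] gives chains of measurable sets with steps of mass at most
   [1/k], along which any set can be split in any proportion. *)

Record ultrafilter {I : Type} (U : (I -> Prop) -> Prop) : Prop := {
  uf_and : forall A B, U A -> U B -> U (fun i => A i /\ B i);
  uf_mono : forall A B : I -> Prop, (forall i, A i -> B i) -> U A -> U B;
  uf_proper : ~ U (fun _ => False);
  uf_total : forall A, U A \/ U (fun i => ~ A i) }.

Module UltrafilterLemma.
Import all_boot classical_sets boolp filter.

Lemma ultrafilter_of_base (I : Type) (B : (I -> Prop) -> Prop) :
  (exists A, B A) ->
  (forall A1 A2, B A1 -> B A2 -> exists A3, B A3 /\ forall i, A3 i -> A1 i /\ A2 i) ->
  (forall A, B A -> exists i, A i) ->
  exists U, ultrafilter U /\ forall A, B A -> U A.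
Proof.
move=> [A0 BA0] Bdirected Bne.
have Ffrom : Filter (filter_from B id).
  apply: filter_from_filter; first by exists A0.
  move=> A1 A2 BA1 BA2; have [A3 [BA3 sub3]] := Bdirected _ _ BA1 BA2.
  by exists A3 => // x /sub3 [].
have Fproper : ProperFilter (filter_from B id).
  by apply: filter_from_proper => A BA; have [x Ax] := Bne _ BA; exists x.
have [G [UG sub]] := ultraFilterLemma Fproper.
exists G; split; last by move=> A BA; apply: sub; exists A.
split.
- by move=> A1 A2; apply: filterI.
- by move=> A1 A2 sub12; apply: filterS => x; apply: sub12.
- by move=> G0; apply: (filter_not_empty G); apply: filterS G0.
- by move=> A; apply: (in_ultra_setVsetC A UG).
Qed.

End UltrafilterLemma.

Lemma set_ext {T : Type} (A B : T -> Prop) : (forall w, A w <-> B w) -> A = B.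
Proof.
  intro H; apply functional_extensionality; intro w; apply propositional_extensionality; auto.
Qed.

Section SigmaAlgebra.
Context {T : Type} (Sigma : (T -> Prop) -> Prop) (hS : sigma_algebra Sigma).

Lemma measurable_full : Sigma (fun _ => True).
Proof. apply hS. Qed.

Lemma measurable_compl A : Sigma A -> Sigma (fun w => ~ A w).
Proof. apply hS. Qed.

Lemma measurable_empty : Sigma (fun _ => False).
Proof.
  rewrite (set_ext (fun _ => False) (fun w => ~ (fun _ => True) w)) by tauto.
  apply measurable_compl, measurable_full.
Qed.

Lemma measurable_union A B : Sigma A -> Sigma B -> Sigma (fun w => A w \/ B w).
Proof.
  intros HA HB.
  rewrite (set_ext (fun w => A w \/ B w)
    (fun w => exists n, match n with 0%nat => A | _ => B end w)).
  - apply hS; intros [|n]; auto.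
  - intro w; split.
    + intros [HAw|HBw]; [exists 0%nat | exists 1%nat]; auto.
    + intros [[|n] Hw]; auto.
Qed.

Lemma measurable_inter A B : Sigma A -> Sigma B -> Sigma (fun w => A w /\ B w).
Proof.
  intros HA HB.
  rewrite (set_ext (fun w => A w /\ B w) (fun w => ~ (~ A w \/ ~ B w))) by (intro; tauto).
  apply measurable_compl, measurable_union; apply measurable_compl; auto.
Qed.

Lemma measurable_diff A B : Sigma A -> Sigma B -> Sigma (fun w => A w /\ ~ B w).
Proof. intros HA HB; apply measurable_inter, measurable_compl; auto. Qed.

Lemma measurable_const (p : Prop) : Sigma (fun _ => p).
Proof.
  destruct (classic p) as [Hp|Hp].
  - rewrite (set_ext (fun _ => p) (fun _ => True)) by tauto; apply measurable_full.
  - rewrite (set_ext (fun _ => p) (fun _ => False)) by tauto; apply measurable_empty.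
Qed.

End SigmaAlgebra.

Section FiniteAdditivity.
Context {T : Type} (Sigma : (T -> Prop) -> Prop) (mu : (T -> Prop) -> R).
Hypotheses (hS : sigma_algebra Sigma) (hmu : fa_probability Sigma mu).

Lemma fa_ge0 A : Sigma A -> 0 <= mu A.
Proof. apply hmu. Qed.

Lemma fa_additive A B : Sigma A -> Sigma B -> (forall w, A w -> B w -> False) ->
  mu (fun w => A w \/ B w) = mu A + mu B.
Proof. apply hmu. Qed.

Lemma fa_split A C : Sigma A -> Sigma C ->
  mu A = mu (fun w => A w /\ C w) + mu (fun w => A w /\ ~ C w).
Proof.
  intros HA HC.
  rewrite <- fa_additive.
  - f_equal; apply set_ext; intro w; tauto.
  - apply measurable_inter; auto.
  - apply measurable_diff; auto.
  - intro w; tauto.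
Qed.

Lemma fa_le A B : Sigma A -> Sigma B -> (forall w, A w -> B w) -> mu A <= mu B.
Proof.
  intros HA HB AB.
  rewrite (fa_split B A HB HA), (set_ext (fun w => B w /\ A w) A)
    by (intro w; specialize (AB w); tauto).
  assert (0 <= mu (fun w => B w /\ ~ A w)) by (apply fa_ge0, measurable_diff; auto).
  lra.
Qed.

Lemma fa_le1 A : Sigma A -> mu A <= 1.
Proof.
  intro HA; destruct hmu as [_ [full _]]; rewrite <- full.
  apply fa_le; auto; apply measurable_full; auto.
Qed.

Lemma fa_compl A : Sigma A -> mu A + mu (fun w => ~ A w) = 1.
Proof.
  intro HA; destruct hmu as [_ [full _]]; rewrite <- full.
  rewrite (fa_split (fun _ => True) A) by (auto; apply measurable_full; auto).
  f_equal; f_equal; apply set_ext; tauto.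
Qed.

Lemma fa_null Z : (forall w, ~ Z w) -> mu Z = 0.
Proof.
  intro HZ; rewrite (set_ext Z (fun _ => False)) by (intro w; specialize (HZ w); tauto).
  assert (E := fa_additive _ _ (measurable_empty Sigma hS) (measurable_empty Sigma hS)
    (fun _ h _ => h)).
  rewrite (set_ext (fun _ => False \/ False) (fun _ => False)) in E by tauto.
  lra.
Qed.

End FiniteAdditivity.

Lemma nondecreasing_crossing (f : nat -> R) (t : R) k :
  (forall j, f j <= f (S j)) -> f 0%nat <= t -> t <= f k ->
  exists j, f j <= t /\ t <= f (S j).
Proof.
  intros Hf H0; induction k as [|k IH]; intro Hk.
  - exists 0%nat; specialize (Hf 0%nat); lra.
  - destruct (Rle_dec t (f k)) as [Htk|Htk]; auto.
    exists k; lra.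
Qed.

Lemma Req_of_dist_le_inv_succ (x y : R) : (forall n, Rabs (x - y) <= / INR (S n)) -> x = y.
Proof.
  intro H; destruct (Req_dec x y) as [|Hxy]; auto; exfalso.
  assert (Hpos : 0 < Rabs (x - y)) by (apply Rabs_pos_lt; lra).
  destruct (archimed_cor1 _ Hpos) as [N [HN HN0]].
  assert (/ INR (S N) <= / INR N)
    by (apply Rinv_le_contravar; [apply lt_0_INR | apply le_INR]; lia).
  specialize (H N); lra.
Qed.

Lemma div_INR_succ_eventually_le (c eps : R) : 0 < eps ->
  exists n0, forall n, (n0 <= n)%nat -> c / INR (S n) <= eps.
Proof.
  intro Heps; destruct (INR_archimed eps c Heps) as [n0 Hn0]; exists n0; intros n Hn.
  assert (INR n0 <= INR (S n)) by (apply le_INR; lia).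
  assert (0 < INR (S n)) by (apply lt_0_INR; lia).
  apply (Rmult_le_reg_r (INR (S n))); auto.
  unfold Rdiv; rewrite Rmult_assoc, Rinv_l; nra.
Qed.

Section StrongNonatomicity.
Context {T : Type} (Sigma : (T -> Prop) -> Prop) (mu : (T -> Prop) -> R).
Hypotheses (hS : sigma_algebra Sigma) (hmu : fa_probability Sigma mu).

Definition fine_chain (r : R) (L : nat -> T -> Prop) (k : nat) : Prop :=
  (forall j, Sigma (L j)) /\ (forall j w, L j w -> L (S j) w) /\ (forall w, ~ L 0%nat w) /\
  (forall j, mu (fun w => L (S j) w /\ ~ L j w) <= r) /\ mu (fun w => ~ L k w) = 0.

Definition bracket (E : T -> Prop) (t : R) (p : (T -> Prop) * (T -> Prop)) : Prop :=
  Sigma (fst p) /\ Sigma (snd p) /\ (forall w, fst p w -> snd p w) /\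
  (forall w, snd p w -> E w) /\ mu (fst p) <= t <= mu (snd p).

(* Sweep [F] up to [G] along the chain: [F \/ (G /\ L j)] runs from [mu F] to [mu G]
   in steps at most [r]. *)
Lemma bracket_refine r L k E t F G : fine_chain r L k -> bracket E t (F, G) ->
  exists F' G', bracket E t (F', G') /\ (forall w, F w -> F' w) /\
    (forall w, G' w -> G w) /\ mu G' - mu F' <= r.
Proof.
  intros [HL [Linc [L0 [Lstep Lk]]]] [HF [HG [FG [GE Ht]]]]; simpl in *.
  set (sweep := fun j w => F w \/ (G w /\ L j w)).
  assert (Hsweep : forall j, Sigma (sweep j)).
  { intro j; apply measurable_union, measurable_inter; auto. }
  assert (sweep_G : forall j w, sweep j w -> G w) by (intros j w [Hw|[Hw _]]; auto).
  assert (sweep_inc : forall j w, sweep j w -> sweep (S j) w).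
  { intros j w [Hw|[Hw HLw]]; [left | right]; auto. }
  assert (sweep_le : forall j, mu (sweep j) <= mu (sweep (S j))).
  { intro j; apply (fa_le Sigma); auto. }
  assert (sweep_gap : forall j, mu (sweep (S j)) - mu (sweep j) <= r).
  { intro j; rewrite (fa_split Sigma mu hS hmu (sweep (S j)) (sweep j)) by auto.
    rewrite (set_ext (fun w => sweep (S j) w /\ sweep j w) (sweep j))
      by (intro w; split; [tauto | auto]).
    assert (mu (fun w => sweep (S j) w /\ ~ sweep j w) <= mu (fun w => L (S j) w /\ ~ L j w)).
    { apply (fa_le Sigma mu hS hmu); try apply measurable_diff; auto.
      unfold sweep; intro w; tauto. }
    specialize (Lstep j); lra. }
  assert (sweep0 : mu (sweep 0%nat) = mu F).
  { f_equal; apply set_ext; intro w; specialize (L0 w); unfold sweep; tauto. }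
  assert (sweepk : mu (sweep k) = mu G).
  { rewrite (fa_split Sigma mu hS hmu G (sweep k)) by auto.
    rewrite (set_ext (fun w => G w /\ sweep k w) (sweep k))
      by (intro w; split; [tauto | intro Hw; split; [apply (sweep_G k) |]; auto]).
    assert (0 <= mu (fun w => G w /\ ~ sweep k w)) by (apply (fa_ge0 Sigma), measurable_diff; auto).
    assert (mu (fun w => G w /\ ~ sweep k w) <= mu (fun w => ~ L k w)).
    { apply (fa_le Sigma mu hS hmu); [apply measurable_diff | apply measurable_compl |]; auto.
      unfold sweep; intro w; tauto. }
    lra. }
  destruct (nondecreasing_crossing (fun j => mu (sweep j)) t k) as [j [Hj1 Hj2]];
    simpl; auto; try lra.
  exists (sweep j), (sweep (S j)); repeat split; simpl; auto; try lra.
  - intros w Hw; apply GE, (sweep_G _ _ Hw).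
  - intros w Hw; left; auto.
  - apply sweep_G.
Qed.

Lemma nested_brackets E t : (forall n, exists L k, fine_chain (/ INR (S n)) L k) ->
  bracket E t ((fun _ => False), E) ->
  exists br : nat -> (T -> Prop) * (T -> Prop), forall n, bracket E t (br n) /\
    (forall w, fst (br n) w -> fst (br (S n)) w) /\ (forall w, snd (br (S n)) w -> snd (br n) w) /\
    mu (snd (br (S n))) - mu (fst (br (S n))) <= / INR (S n).
Proof.
  intros chains Hstart.
  assert (step : forall np : nat * ((T -> Prop) * (T -> Prop)), exists q,
    bracket E t (snd np) -> bracket E t q /\ (forall w, fst (snd np) w -> fst q w) /\
      (forall w, snd q w -> snd (snd np) w) /\ mu (snd q) - mu (fst q) <= / INR (S (fst np))).
  { intros [n [F G]]; simpl.
    destruct (classic (bracket E t (F, G))) as [Hb|Hb]; [|exists (F, G); tauto].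
    destruct (chains n) as [L [k HL]].
    destruct (bracket_refine _ _ _ _ _ _ _ HL Hb) as [F' [G' HFG']].
    exists (F', G'); auto. }
  destruct (choice _ step) as [next Hnext].
  set (br := fix br n := match n with
    | 0%nat => ((fun _ : T => False), E)
    | S n => next (n, br n) end).
  assert (Hbr : forall n, bracket E t (br n))
    by (induction n; [apply Hstart | apply (Hnext (n, br n)); auto]).
  exists br; intro n; split; [apply Hbr | apply (Hnext (n, br n) (Hbr n))].
Qed.

(* Finite additivity alone does not pass to the limit; the union of the lower sets is
   squeezed between all the brackets instead. *)
Lemma strongly_nonatomic_of_fine_chains :
  (forall n, exists L k, fine_chain (/ INR (S n)) L k) -> strongly_nonatomic Sigma mu.
Proof.
  intros chains E alpha HE Ha.
  set (t := alpha * mu E).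
  assert (Hstart : bracket E t ((fun _ => False), E)).
  { assert (0 <= mu E) by (apply (fa_ge0 Sigma mu hmu); auto).
    assert (mu (fun _ => False) = 0) by (apply (fa_null Sigma mu hS hmu); auto).
    destruct Ha; unfold t; repeat split; simpl; auto; try apply (measurable_empty Sigma hS);
      try tauto; nra. }
  destruct (nested_brackets E t chains Hstart) as [br Hbr].
  assert (Hin : forall n, bracket E t (br n)) by (intro n; apply Hbr).
  assert (Hnested : forall n m, (n <= m)%nat ->
    (forall w, fst (br n) w -> fst (br m) w) /\ (forall w, snd (br m) w -> snd (br n) w)).
  { intros n m Hnm; induction Hnm as [|m _ [IH1 IH2]]; [split; auto|].
    destruct (Hbr m) as [_ [H1 [H2 _]]]; split; auto. }
  set (F := fun w => exists n, fst (br n) w).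
  assert (HF : Sigma F) by (apply hS; intro n; apply (Hin n)).
  assert (F_upper : forall n w, F w -> snd (br n) w).
  { intros n w [m Hm]; destruct (Nat.le_gt_cases m n) as [Hmn|Hnm].
    - apply (Hin n), (Hnested m n Hmn); auto.
    - apply (Hnested n m ltac:(lia)), (Hin m); auto. }
  exists F; split; [|split]; auto.
  - intros w Hw; apply (Hin 0%nat), (F_upper 0%nat w Hw).
  - apply Req_of_dist_le_inv_succ; intro n.
    destruct (Hin (S n)) as [H1 [H2 [_ [_ Ht]]]].
    destruct (Hbr n) as [_ [_ [_ Hgap]]].
    assert (mu (fst (br (S n))) <= mu F)
      by (apply (fa_le Sigma mu hS hmu); auto; intros w Hw; exists (S n); auto).
    assert (mu F <= mu (snd (br (S n)))) by (apply (fa_le Sigma mu hS hmu); auto; apply F_upper).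
    apply Rabs_le; fold t; lra.
Qed.

End StrongNonatomicity.

Section Ultralimits.
Context {I : Type} (U : (I -> Prop) -> Prop) (hU : ultrafilter U).

Definition ultralim (f : I -> R) (c : R) : Prop :=
  forall eps, 0 < eps -> U (fun i => Rabs (f i - c) < eps).

Lemma ultrafilter_meet A B : U A -> U B -> exists i, A i /\ B i.
Proof.
  intros HA HB; apply NNPP; intro Hno.
  apply (uf_proper U hU), (uf_mono U hU (fun i => A i /\ B i)); [|apply (uf_and U hU); auto].
  intros i Hi; apply Hno; exists i; auto.
Qed.

Lemma ultralim_exists f : U (fun i => 0 <= f i <= 1) -> exists c, ultralim f c.
Proof.
  intro Hf; set (lower := fun t => U (fun i => t <= f i)).
  assert (lower_le1 : forall t, lower t -> t <= 1).
  { intros t Ht; destruct (ultrafilter_meet _ _ Ht Hf) as [i Hi]; lra. }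
  destruct (completeness lower) as [c [Hub Hlub]].
  - exists 1; intros t Ht; apply lower_le1; auto.
  - exists 0; apply (uf_mono U hU _ _ (fun i Hi => proj1 Hi) Hf).
  - exists c; intros eps Heps.
    assert (above : U (fun i => c - eps < f i)).
    { apply NNPP; intro Hno.
      enough (c <= c - eps) by lra.
      apply Hlub; intros t Ht; destruct (Rle_dec t (c - eps)) as [|Hgt]; auto.
      exfalso; apply Hno,
        (uf_mono U hU _ _ (fun i Hi => Rlt_le_trans _ _ _ (Rnot_le_lt _ _ Hgt) Hi) Ht). }
    assert (below : U (fun i => f i < c + eps)).
    { destruct (uf_total U hU (fun i => f i < c + eps)) as [|Hno]; auto.
      enough (c + eps <= c) by lra.
      apply Hub, (uf_mono U hU _ _ (fun i Hi => Rnot_lt_le _ _ Hi) Hno). }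
    apply (uf_mono U hU (fun i => c - eps < f i /\ f i < c + eps)); [|apply (uf_and U hU); auto].
    intros i [H1 H2]; apply Rabs_def1; lra.
Qed.

Lemma ultralim_unique f c c' : ultralim f c -> ultralim f c' -> c = c'.
Proof.
  intros Hc Hc'; destruct (Req_dec c c') as [|Hne]; auto; exfalso.
  assert (0 < Rabs (c - c')) by (apply Rabs_pos_lt; lra).
  assert (Hpos : 0 < Rabs (c - c') / 2) by lra.
  destruct (ultrafilter_meet _ _ (Hc _ Hpos) (Hc' _ Hpos)) as [i [H1 H2]].
  assert (Rabs (c - c') <= Rabs (f i - c) + Rabs (f i - c')).
  { replace (c - c') with (- (f i - c) + (f i - c')) by ring.
    rewrite <- (Rabs_Ropp (f i - c)); apply Rabs_triang. }
  lra.
Qed.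

Lemma ultralim_plus f g a b : ultralim f a -> ultralim g b -> ultralim (fun i => f i + g i) (a + b).
Proof.
  intros Hf Hg eps Heps.
  apply (uf_mono U hU (fun i => Rabs (f i - a) < eps / 2 /\ Rabs (g i - b) < eps / 2));
    [|apply (uf_and U hU); [apply Hf | apply Hg]; lra].
  intros i [H1 H2]; replace (f i + g i - (a + b)) with ((f i - a) + (g i - b)) by ring.
  eapply Rle_lt_trans; [apply Rabs_triang | lra].
Qed.

Lemma ultralim_le f c r : ultralim f c ->
  (forall eps, 0 < eps -> U (fun i => f i <= r + eps)) -> c <= r.
Proof.
  intros Hf Hr; apply Rnot_lt_le; intro Hlt.
  assert (Hpos : 0 < (c - r) / 2) by lra.
  destruct (ultrafilter_meet _ _ (Hf _ Hpos) (Hr _ Hpos)) as [i [H1 H2]].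
  apply Rabs_def2 in H1; lra.
Qed.

Lemma ultralim_ge f c r : ultralim f c -> U (fun i => r <= f i) -> r <= c.
Proof.
  intros Hf Hr; apply Rnot_lt_le; intro Hlt.
  assert (Hpos : 0 < (r - c) / 2) by lra.
  destruct (ultrafilter_meet _ _ (Hf _ Hpos) Hr) as [i [H1 H2]].
  apply Rabs_def2 in H1; lra.
Qed.

Lemma ultralim_const f c : U (fun i => f i = c) -> ultralim f c.
Proof.
  intros Hc eps Heps; apply (uf_mono U hU (fun i => f i = c)); auto.
  intros i Hi; rewrite Hi, Rminus_diag, Rabs_R0; auto.
Qed.

End Ultralimits.

Lemma sum_f_R0_le_length (f : nat -> R) N N' : (forall m, 0 <= f m) -> (N <= N')%nat ->
  sum_f_R0 f N <= sum_f_R0 f N'.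
Proof.
  intros Hf HN; induction HN as [|N' _ IH]; simpl; [lra|].
  specialize (Hf (S N')); lra.
Qed.

Lemma sum_f_R0_tail_zero (f : nat -> R) M N : (forall m, f m <= 1) ->
  (forall m, (M <= m)%nat -> f m = 0) -> sum_f_R0 f N <= INR M.
Proof.
  intros Hf1 Hf0.
  enough (sum_f_R0 f N <= INR (Nat.min (S N) M))
    by (pose proof (le_INR _ _ (Nat.le_min_r (S N) M)); lra).
  induction N as [|N IH]; simpl sum_f_R0.
  - destruct M as [|M]; simpl; [rewrite Hf0 by lia; lra | apply Hf1].
  - destruct (Nat.le_gt_cases M (S N)) as [HM|HM].
    + replace (Nat.min (S (S N)) M) with (Nat.min (S N) M) by lia.
      rewrite (Hf0 (S N) HM); lra.
    + replace (Nat.min (S (S N)) M) with (S (Nat.min (S N) M)) by lia.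
      rewrite S_INR; specialize (Hf1 (S N)); lra.
Qed.

Lemma sum_f_R0_indicator_eq (j N : nat) :
  sum_f_R0 (fun i => if i =? j then 1 else 0) N = if j <=? N then 1 else 0.
Proof.
  induction N as [|N IH]; cbn [sum_f_R0].
  - destruct j; reflexivity.
  - rewrite IH; destruct (Nat.eqb_spec (S N) j), (Nat.leb_spec j N), (Nat.leb_spec j (S N));
      try lia; lra.
Qed.

(* Blocks [k q, k q + k - 1] each contain exactly one residue [j]. *)
Lemma sum_f_R0_indicator_mod_le (k j n : nat) : (0 < k)%nat ->
  sum_f_R0 (fun m => if m mod k =? j then 1 else 0) n <= INR (n / k) + 1.
Proof.
  intro Hk; set (g := fun m => if m mod k =? j then 1 else 0).
  assert (block : forall q, sum_f_R0 (fun i => g (k * q + i)%nat) (k - 1) <= 1).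
  { intro q; rewrite (sum_eq _ (fun i => if i =? j then 1 else 0)).
    - rewrite sum_f_R0_indicator_eq; destruct (j <=? k - 1); lra.
    - intros i Hi; unfold g.
      rewrite Nat.mul_comm, Nat.add_comm, Nat.Div0.mod_add, Nat.mod_small by lia.
      reflexivity. }
  assert (blocks : forall q, sum_f_R0 g (k * q + (k - 1)) <= INR q + 1).
  { induction q as [|q IH].
    - rewrite Nat.mul_0_r, Nat.add_0_l, (sum_eq g (fun i => g (k * 0 + i)%nat))
        by (intros; rewrite Nat.mul_0_r; reflexivity).
      specialize (block 0%nat); simpl INR; lra.
    - rewrite (tech2 g (k * q + (k - 1)) (k * S q + (k - 1))) by (rewrite Nat.mul_succ_r; lia).
      replace (k * S q + (k - 1) - S (k * q + (k - 1)))%nat with (k - 1)%nat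
        by (rewrite Nat.mul_succ_r; lia).
      rewrite (sum_eq (fun i => g (S (k * q + (k - 1)) + i)%nat) (fun i => g (k * S q + i)%nat))
        by (intros i _; f_equal; rewrite Nat.mul_succ_r; lia).
      rewrite S_INR; specialize (block (S q)); lra. }
  assert (Hn : (n <= k * (n / k) + (k - 1))%nat).
  { pose proof (Nat.div_mod n k ltac:(lia)); pose proof (Nat.mod_upper_bound n k ltac:(lia)); lia. }
  assert (g_ge0 : forall m, 0 <= g m) by (intro m; unfold g; destruct (_ =? _); lra).
  eapply Rle_trans; [apply (sum_f_R0_le_length g _ _ g_ge0 Hn) | apply blocks].
Qed.

Definition indicator {T : Type} (A : T -> Prop) (w : T) : R :=
  if excluded_middle_informative (A w) then 1 else 0.

Lemma indicator_bounds {T : Type} (A : T -> Prop) w : 0 <= indicator A w <= 1.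
Proof. unfold indicator; destruct (excluded_middle_informative (A w)); lra. Qed.

Lemma indicator_in {T : Type} (A : T -> Prop) w : A w -> indicator A w = 1.
Proof. unfold indicator; destruct (excluded_middle_informative (A w)); tauto. Qed.

Lemma indicator_out {T : Type} (A : T -> Prop) w : ~ A w -> indicator A w = 0.
Proof. unfold indicator; destruct (excluded_middle_informative (A w)); tauto. Qed.

Lemma indicator_union {T : Type} (A B : T -> Prop) w : (A w -> B w -> False) ->
  indicator (fun w => A w \/ B w) w = indicator A w + indicator B w.
Proof.
  intro Hdisj; unfold indicator.
  destruct (excluded_middle_informative (A w)), (excluded_middle_informative (B w)),
    (excluded_middle_informative (A w \/ B w)); tauto || lra.
Qed.

Section Construction.
Variables (X : Type) (d : X -> X -> R) (a b : X).
Hypotheses (hd : is_metric d) (hab : a <> b).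
Variable Sigma : ((nat -> X) -> Prop) -> Prop.
Hypotheses (hS : sigma_algebra Sigma) (hopen : forall U, product_open d U -> Sigma U).
Variable P : ((nat -> X) -> Prop) -> R.
Hypothesis hP : fa_probability Sigma P.

Definition probe (x : nat -> X) (m : nat) : nat -> X :=
  fun i => if i <? m then x i else if i =? 2 * m then b else a.

Definition tag (m : nat) (w : nat -> X) : Prop :=
  w (2 * m)%nat = b /\ forall i, (2 * m < i)%nat -> w i = a.

Lemma probe_tag x m : tag m (probe x m).
Proof.
  unfold tag, probe; split.
  - destruct (Nat.ltb_spec (2 * m) m); [lia|]; rewrite Nat.eqb_refl; auto.
  - intros i Hi; destruct (Nat.ltb_spec i m), (Nat.eqb_spec i (2 * m)); auto; lia.
Qed.

Lemma tag_inj m m' w : tag m w -> tag m' w -> m = m'.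
Proof.
  intros [Hb Ha] [Hb' Ha']; destruct (Nat.lt_total m m') as [Hlt|[|Hlt]]; auto; exfalso.
  - apply hab; rewrite <- Hb', Ha; auto; lia.
  - apply hab; rewrite <- Hb, Ha'; auto; lia.
Qed.

Lemma metric_open_neq c : metric_open d (fun z => z <> c).
Proof.
  destruct hd as [d_ge0 [d_eq0 [_ _]]]; intros z Hz.
  assert (0 < d z c) by (destruct (d_ge0 z c) as [|H0]; auto; exfalso; apply Hz, d_eq0; auto).
  exists (d z c); split; auto.
  intros y Hy <-; lra.
Qed.

Lemma measurable_tag m : Sigma (tag m).
Proof.
  rewrite (set_ext (tag m) (fun w => ~ ~ tag m w)) by (intro; tauto).
  apply (measurable_compl Sigma hS), hopen.
  intros w Hw; destruct (classic (w (2 * m)%nat = b)) as [Hb|Hb].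
  - destruct (not_all_ex_not _ _ (fun Ha => Hw (conj Hb Ha))) as [i Hi].
    destruct (imply_to_and _ _ Hi) as [Hmi Hwi].
    exists (i :: nil), (fun _ z => z <> a); split; [intro; apply metric_open_neq|split].
    + intros j [<-|[]]; auto.
    + intros w' Hw' [_ Ha]; apply (Hw' i (or_introl eq_refl)), Ha; auto.
  - exists ((2 * m)%nat :: nil), (fun _ z => z <> b); split; [intro; apply metric_open_neq|split].
    + intros j [<-|[]]; auto.
    + intros w' Hw' [Hb' _]; apply (Hw' (2 * m)%nat (or_introl eq_refl)); auto.
Qed.

Lemma product_open_probe U x : product_open d U -> U x ->
  exists M, forall m, (M <= m)%nat -> U (probe x m).
Proof.
  intros HU Hx; destruct (HU x Hx) as [F [V [_ [HxV HVU]]]].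
  exists (S (list_max F)); intros m Hm; apply HVU; intros i Hi.
  assert (i <= list_max F)%nat
    by (apply (proj1 (Forall_forall _ F) (proj1 (list_max_le F _) (Nat.le_refl _))), Hi).
  unfold probe; destruct (Nat.ltb_spec i m); auto; lia.
Qed.

Definition freq (n : nat) (x : nat -> X) (A : (nat -> X) -> Prop) : R :=
  sum_f_R0 (fun m => indicator A (probe x m)) n / INR (S n).

Lemma freq_bounds n x A : 0 <= freq n x A <= 1.
Proof.
  pose proof (lt_0_INR (S n) ltac:(lia)).
  assert (0 <= sum_f_R0 (fun m => indicator A (probe x m)) n <= INR (S n)).
  { rewrite <- (Rmult_1_l (INR (S n))), <- sum_cte; split.
    - apply cond_pos_sum; intro; apply indicator_bounds.
    - apply sum_growing; intro; apply indicator_bounds. }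
  assert (0 < / INR (S n)) by (apply Rinv_0_lt_compat; lra).
  unfold freq, Rdiv; split; [apply Rmult_le_pos; lra|].
  rewrite <- (Rinv_r (INR (S n))) by lra; apply Rmult_le_compat_r; lra.
Qed.

Lemma freq_full n x : freq n x (fun _ => True) = 1.
Proof.
  unfold freq; rewrite (sum_eq _ (fun _ => 1)) by (intros; apply indicator_in; auto).
  rewrite sum_cte; field; apply not_0_INR; lia.
Qed.

Lemma freq_union n x A B : (forall w, A w -> B w -> False) ->
  freq n x (fun w => A w \/ B w) = freq n x A + freq n x B.
Proof.
  intro Hdisj; unfold freq.
  rewrite (sum_eq _ (fun m => indicator A (probe x m) + indicator B (probe x m)))
    by (intros; apply indicator_union, Hdisj).
  rewrite plus_sum; unfold Rdiv; ring.
Qed.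

Lemma freq_le_of_eventually_out n x A M : (forall m, (M <= m)%nat -> ~ A (probe x m)) ->
  freq n x A <= INR M / INR (S n).
Proof.
  intro HM; unfold freq, Rdiv; apply Rmult_le_compat_r.
  - apply Rlt_le, Rinv_0_lt_compat, lt_0_INR; lia.
  - apply sum_f_R0_tail_zero; [intro; apply indicator_bounds|].
    intros m Hm; apply indicator_out, HM; auto.
Qed.

Definition witness (C : (nat -> X) -> Prop) : nat -> X := epsilon (inhabits (fun _ => a)) C.

Fixpoint approx (l : list ((nat -> X) -> Prop)) (n : nat) (A : (nat -> X) -> Prop) : R :=
  match l with
  | nil => 0
  | C :: l => P C * freq n (witness C) A + approx l n A
  end.

Fixpoint partition (Z : (nat -> X) -> Prop) (l : list ((nat -> X) -> Prop)) : Prop :=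
  match l with
  | nil => forall w, ~ Z w
  | C :: l => Sigma C /\ (forall w, C w -> Z w) /\ partition (fun w => Z w /\ ~ C w) l
  end.

Lemma approx_ge0 l n A : forall Z, partition Z l -> 0 <= approx l n A.
Proof.
  induction l as [|C l IH]; intros Z HZ; simpl in *; [lra|].
  destruct HZ as [HC [_ Hl]].
  pose proof (fa_ge0 Sigma P hP C HC); pose proof (freq_bounds n (witness C) A).
  pose proof (IH _ Hl); nra.
Qed.

Lemma approx_le l n A r : 0 <= r -> (forall x, freq n x A <= r) ->
  forall Z, Sigma Z -> partition Z l -> approx l n A <= r * P Z.
Proof.
  intros Hr Hfreq; induction l as [|C l IH]; intros Z HZ Hl; simpl in *.
  - rewrite (fa_null Sigma P hS hP Z Hl); lra.
  - destruct Hl as [HC [CZ Hl]].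
    pose proof (IH _ (measurable_diff Sigma hS Z C HZ HC) Hl).
    rewrite (fa_split Sigma P hS hP Z C HZ HC), (set_ext (fun w => Z w /\ C w) C)
      by (intro w; specialize (CZ w); tauto).
    pose proof (fa_ge0 Sigma P hP C HC); pose proof (Hfreq (witness C)); nra.
Qed.

Lemma approx_full l n : forall Z, Sigma Z -> partition Z l -> approx l n (fun _ => True) = P Z.
Proof.
  induction l as [|C l IH]; intros Z HZ Hl; simpl in *.
  - symmetry; apply (fa_null Sigma P hS hP Z Hl).
  - destruct Hl as [HC [CZ Hl]].
    rewrite freq_full, (IH _ (measurable_diff Sigma hS Z C HZ HC) Hl).
    rewrite (fa_split Sigma P hS hP Z C HZ HC), (set_ext (fun w => Z w /\ C w) C)
      by (intro w; specialize (CZ w); tauto).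
    ring.
Qed.

Lemma approx_union l n A B : (forall w, A w -> B w -> False) ->
  approx l n (fun w => A w \/ B w) = approx l n A + approx l n B.
Proof.
  intro Hdisj; induction l as [|C l IH]; simpl; [ring|].
  rewrite IH, freq_union by auto; ring.
Qed.

Definition decides (K : (nat -> X) -> Prop) (l : list ((nat -> X) -> Prop)) : Prop :=
  Forall (fun C => (forall w, C w -> K w) \/ (forall w, C w -> ~ K w)) l.

Definition refine (K : (nat -> X) -> Prop) (l : list ((nat -> X) -> Prop)) :=
  flat_map (fun C => (fun w => C w /\ K w) :: (fun w => C w /\ ~ K w) :: nil) l.

Definition refine_all (Ks : list ((nat -> X) -> Prop)) :=
  fold_right refine ((fun _ => True) :: nil) Ks.

Lemma partition_refine K l : Sigma K -> forall Z, partition Z l -> partition Z (refine K l).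
Proof.
  intro HK; induction l as [|C l IH]; intros Z Hl; simpl in *; auto.
  destruct Hl as [HC [CZ Hl]].
  split; [apply (measurable_inter Sigma hS); auto|].
  split; [intros w [Hw _]; auto|].
  split; [apply (measurable_diff Sigma hS); auto|].
  split; [intros w [Hw HKw]; split; [auto | tauto]|].
  rewrite (set_ext (fun w => (Z w /\ ~ (C w /\ K w)) /\ ~ (C w /\ ~ K w)) (fun w => Z w /\ ~ C w))
    by (intro; tauto); auto.
Qed.

Lemma decides_refine_self K l : decides K (refine K l).
Proof.
  induction l as [|C l IH]; simpl; constructor; [left; intros w [_ Hw]; auto|].
  constructor; [right; intros w [_ Hw]; auto | apply IH].
Qed.

Lemma decides_refine K K' l : decides K' l -> decides K' (refine K l).
Proof.
  unfold decides; induction l as [|C l IH]; intro Hl; simpl; [constructor|].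
  inversion_clear Hl as [|? ? HC Hl'].
  assert (sub : forall D, (forall w, D w -> C w) ->
    (forall w, D w -> K' w) \/ (forall w, D w -> ~ K' w))
    by (intros D DC; destruct HC as [HC|HC]; [left | right]; intros w Hw; apply HC, DC, Hw).
  constructor; [apply sub; tauto | constructor; [apply sub; tauto | apply IH, Hl']].
Qed.

Lemma refine_all_spec Ks : Forall Sigma Ks ->
  partition (fun _ => True) (refine_all Ks) /\ Forall (fun K => decides K (refine_all Ks)) Ks.
Proof.
  induction Ks as [|K Ks IH]; intro HKs; simpl.
  - repeat split; auto; [apply measurable_full, hS | intros w [_ Hw]; auto].
  - inversion_clear HKs as [|? ? HK HKs']; destruct (IH HKs') as [Hpart Hdec].
    split; [apply partition_refine; auto|].
    constructor; [apply decides_refine_self|].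
    eapply Forall_impl; [|exact Hdec]; intros K' HK'; apply decides_refine, HK'.
Qed.

Definition fine (Ks : list ((nat -> X) -> Prop)) (N : list ((nat -> X) -> Prop) -> nat)
  (i : list ((nat -> X) -> Prop) * nat) : Prop :=
  partition (fun _ => True) (fst i) /\ Forall (fun K => decides K (fst i)) Ks /\
  (N (fst i) <= snd i)%nat.

Definition fine_base (A : list ((nat -> X) -> Prop) * nat -> Prop) : Prop :=
  exists Ks N, Forall Sigma Ks /\ A = fine Ks N.

Lemma fine_base_nonempty : exists A, fine_base A.
Proof. exists (fine nil (fun _ => 0%nat)), nil, (fun _ => 0%nat); auto. Qed.

Lemma fine_base_directed A1 A2 : fine_base A1 -> fine_base A2 ->
  exists A3, fine_base A3 /\ forall i, A3 i -> A1 i /\ A2 i.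
Proof.
  intros [Ks1 [N1 [HKs1 ->]]] [Ks2 [N2 [HKs2 ->]]].
  exists (fine (Ks1 ++ Ks2) (fun l => Nat.max (N1 l) (N2 l))); split.
  - exists (Ks1 ++ Ks2), (fun l => Nat.max (N1 l) (N2 l)); split; auto; apply Forall_app; auto.
  - intros i [Hpart [Hdec HN]]; apply Forall_app in Hdec as [Hdec1 Hdec2].
    repeat split; auto; lia.
Qed.

Lemma fine_base_proper A : fine_base A -> exists i, A i.
Proof.
  intros [Ks [N [HKs ->]]]; destruct (refine_all_spec Ks HKs) as [Hpart Hdec].
  exists (refine_all Ks, N (refine_all Ks)); repeat split; auto.
Qed.

Section Domination.
Variable K : (nat -> X) -> Prop.
Hypotheses (HK : Sigma K)
  (K_closed : forall x, ~ K x -> exists M, forall m, (M <= m)%nat -> ~ K (probe x m)).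

(* A cell outside [K] has its witness outside [K]; since [K] is closed its probes
   eventually leave [K], so their frequency in [K] tends to [0]. *)
Lemma cell_approx_le C eps : Sigma C -> (forall w, C w -> K w) \/ (forall w, C w -> ~ K w) ->
  0 < eps -> exists n0, forall n, (n0 <= n)%nat ->
    P C * freq n (witness C) K <= P (fun w => C w /\ K w) + eps.
Proof.
  intros HC Hdec Heps.
  pose proof (fa_ge0 Sigma P hP C HC) as PC0.
  destruct Hdec as [CK|CnotK].
  - exists 0%nat; intros n _; pose proof (freq_bounds n (witness C) K).
    rewrite (set_ext (fun w => C w /\ K w) C) by (intro w; specialize (CK w); tauto); nra.
  - pose proof (fa_ge0 Sigma P hP _ (measurable_inter Sigma hS C K HC HK)).
    destruct (classic (exists w, C w)) as [HCne|HCempty].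
    + assert (Cwit : C (witness C)) by (unfold witness; apply epsilon_spec, HCne).
      destruct (K_closed _ (CnotK _ Cwit)) as [M HM].
      destruct (div_INR_succ_eventually_le (INR M) eps Heps) as [n0 Hn0]; exists n0; intros n Hn.
      pose proof (freq_le_of_eventually_out n (witness C) K M HM); specialize (Hn0 n Hn).
      pose proof (fa_le1 Sigma P hS hP C HC); pose proof (freq_bounds n (witness C) K); nra.
    + exists 0%nat; intros n _.
      rewrite (fa_null Sigma P hS hP C) by (intros w Hw; apply HCempty; exists w; auto); lra.
Qed.

Lemma approx_closed_le l : forall Z, Sigma Z -> partition Z l -> decides K l ->
  forall eps, 0 < eps -> exists n0, forall n, (n0 <= n)%nat ->
    approx l n K <= P (fun w => Z w /\ K w) + eps.
Proof.
  induction l as [|C l IH]; intros Z HZ Hl Hdec eps Heps; simpl in *.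
  - exists 0%nat; intros n _.
    rewrite (fa_null Sigma P hS hP) by (intros w [Hw _]; apply (Hl w Hw)); lra.
  - destruct Hl as [HC [CZ Hl]]; inversion_clear Hdec as [|? ? HdecC Hdecl].
    destruct (IH _ (measurable_diff Sigma hS Z C HZ HC) Hl Hdecl (eps / 2) ltac:(lra)) as [n1 Hn1].
    destruct (cell_approx_le C (eps / 2) HC HdecC ltac:(lra)) as [n2 Hn2].
    exists (Nat.max n1 n2); intros n Hn.
    specialize (Hn1 n ltac:(lia)); specialize (Hn2 n ltac:(lia)).
    rewrite (fa_split Sigma P hS hP _ C (measurable_inter Sigma hS Z K HZ HK) HC).
    rewrite (set_ext (fun w => (Z w /\ K w) /\ C w) (fun w => C w /\ K w))
      by (intro w; specialize (CZ w); tauto).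
    rewrite (set_ext (fun w => (Z w /\ K w) /\ ~ C w) (fun w => (Z w /\ ~ C w) /\ K w))
      by (intro; tauto).
    lra.
Qed.

End Domination.

Definition layer (k j : nat) (w : nat -> X) : Prop := exists m, (m mod k < j)%nat /\ tag m w.

Lemma probe_layer k j x m : layer k j (probe x m) <-> (m mod k < j)%nat.
Proof.
  split; [intros [m' [Hm' Htag]]; rewrite (tag_inj _ _ _ (probe_tag x m) Htag); auto|].
  intro Hm; exists m; split; auto; apply probe_tag.
Qed.

Lemma measurable_layer k j : Sigma (layer k j).
Proof.
  apply hS; intro m; apply (measurable_inter Sigma hS);
    [apply (measurable_const Sigma hS) | apply measurable_tag].
Qed.

Lemma freq_layer_step_le k j n x : (0 < k)%nat ->
  freq n x (fun w => layer k (S j) w /\ ~ layer k j w) <= / INR k + / INR (S n).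
Proof.
  intro Hk; unfold freq.
  rewrite (sum_eq _ (fun m => if m mod k =? j then 1 else 0)).
  2:{ intros m _; destruct (Nat.eqb_spec (m mod k) j); [apply indicator_in | apply indicator_out];
      cbv beta; rewrite !probe_layer; lia. }
  pose proof (sum_f_R0_indicator_mod_le k j n Hk).
  assert (0 < INR k) by (apply lt_0_INR; auto).
  assert (0 < INR (S n)) by (apply lt_0_INR; lia).
  assert (INR (n / k) * INR k <= INR (S n)).
  { rewrite <- mult_INR; apply le_INR; pose proof (Nat.Div0.mul_div_le n k); lia. }
  apply (Rmult_le_reg_r (INR k * INR (S n))); [nra|].
  unfold Rdiv; rewrite Rmult_plus_distr_r.
  replace (/ INR k * (INR k * INR (S n))) with (INR (S n)) by (field; lra).
  replace (/ INR (S n) * (INR k * INR (S n))) with (INR k) by (field; lra).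
  rewrite (Rmult_comm (INR k)), <- Rmult_assoc, (Rmult_assoc _ (/ INR (S n))), Rinv_l by lra.
  nra.
Qed.

Section Limit.
Variable U : (list ((nat -> X) -> Prop) * nat -> Prop) -> Prop.
Hypotheses (hU : ultrafilter U) (U_base : forall A, fine_base A -> U A).

Definition Pt (A : (nat -> X) -> Prop) : R :=
  epsilon (inhabits 0) (ultralim U (fun i => approx (fst i) (snd i) A)).

Lemma U_fine Ks N : Forall Sigma Ks -> U (fine Ks N).
Proof. intro HKs; apply U_base; exists Ks, N; auto. Qed.

Lemma U_partition : U (fun i => partition (fun _ => True) (fst i)).
Proof.
  apply (uf_mono U hU (fine nil (fun _ => 0%nat))); [intros i [Hi _]; auto | apply U_fine; auto].
Qed.

Lemma Pt_spec A : ultralim U (fun i => approx (fst i) (snd i) A) (Pt A).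
Proof.
  unfold Pt; apply epsilon_spec, ultralim_exists; auto.
  apply (uf_mono U hU (fun i => partition (fun _ => True) (fst i)));
    [intros i Hi | apply U_partition].
  split; [apply (approx_ge0 _ _ _ _ Hi)|].
  pose proof (approx_le (fst i) (snd i) A 1 ltac:(lra) (fun x => proj2 (freq_bounds _ x A)) _
    (measurable_full Sigma hS) Hi) as Hle.
  destruct hP as [_ [HPT _]]; rewrite HPT in Hle; lra.
Qed.

Lemma fa_probability_Pt : fa_probability Sigma Pt.
Proof.
  split; [|split].
  - intros A _; apply (ultralim_ge U hU _ _ _ (Pt_spec A)).
    apply (uf_mono U hU _ _ (fun i Hi => approx_ge0 (fst i) (snd i) A _ Hi) U_partition).
  - apply (ultralim_unique U hU _ _ _ (Pt_spec _)), (ultralim_const U hU).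
    apply (uf_mono U hU _ _ (fun i Hi => eq_trans (approx_full _ _ _ (measurable_full Sigma hS) Hi)
      (proj1 (proj2 hP))) U_partition).
  - intros A B _ _ Hdisj; apply (ultralim_unique U hU _ _ _ (Pt_spec _)).
    rewrite (functional_extensionality _
      (fun i => approx (fst i) (snd i) A + approx (fst i) (snd i) B))
      by (intro i; apply approx_union, Hdisj).
    apply (ultralim_plus U hU); apply Pt_spec.
Qed.

Lemma Pt_open_ge V : product_open d V -> P V <= Pt V.
Proof.
  intro HV; set (K := fun w => ~ V w).
  assert (HK : Sigma K) by (apply (measurable_compl Sigma hS), hopen, HV).
  assert (K_closed : forall x, ~ K x -> exists M, forall m, (M <= m)%nat -> ~ K (probe x m)).
  { intros x Hx; destruct (product_open_probe V x HV (NNPP _ Hx)) as [M HM].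
    exists M; intros m Hm HKm; apply HKm, HM, Hm. }
  enough (Pt K <= P K).
  { pose proof (fa_compl Sigma P hS hP V (hopen V HV)) as HPV.
    pose proof (fa_compl Sigma Pt hS fa_probability_Pt V (hopen V HV)) as HPtV.
    change (fun w => ~ V w) with K in HPV, HPtV; lra. }
  apply (ultralim_le U hU _ _ _ (Pt_spec K)); intros eps Heps.
  assert (HN : forall l, exists n0, partition (fun _ => True) l -> decides K l ->
    forall n, (n0 <= n)%nat -> approx l n K <= P K + eps).
  { intro l; destruct (classic (partition (fun _ => True) l /\ decides K l)) as [[Hl Hdec]|Hno];
      [|exists 0%nat; tauto].
    destruct (approx_closed_le K HK K_closed l _ (measurable_full Sigma hS) Hl Hdec eps Heps)
      as [n0 Hn0].
    rewrite (set_ext (fun w => True /\ K w) K) in Hn0 by tauto; eauto. }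
  destruct (choice _ HN) as [N HNl].
  apply (uf_mono U hU (fine (K :: nil) N)); [|apply U_fine; auto].
  intros i [Hpart [Hdec HNi]]; inversion_clear Hdec; apply HNl; auto.
Qed.

Lemma Pt_fine_chains n : exists L k, fine_chain Sigma Pt (/ INR (S n)) L k.
Proof.
  exists (layer (S n)), (S n); repeat split.
  - apply measurable_layer.
  - intros j w [m [Hm Htag]]; exists m; split; auto.
  - intros w [m [Hm _]]; lia.
  - intro j; apply (ultralim_le U hU _ _ _ (Pt_spec _)); intros eps Heps.
    destruct (div_INR_succ_eventually_le 1 eps Heps) as [n0 Hn0].
    apply (uf_mono U hU (fine nil (fun _ => n0))); [|apply U_fine; auto].
    intros [l n'] [Hpart [_ Hn']]; cbn [fst snd] in *.
    assert (0 < / INR (S n')) by (apply Rinv_0_lt_compat, lt_0_INR; lia).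
    assert (0 < / INR (S n)) by (apply Rinv_0_lt_compat, lt_0_INR; lia).
    pose proof (approx_le l n' _ (/ INR (S n) + / INR (S n')) ltac:(lra)
      (fun x => freq_layer_step_le (S n) j n' x ltac:(lia))
      _ (measurable_full Sigma hS) Hpart) as Hle.
    rewrite (proj1 (proj2 hP)) in Hle; specialize (Hn0 n' Hn'); unfold Rdiv in Hn0; lra.
  - apply Rle_antisym; [|apply fa_probability_Pt, (measurable_compl Sigma hS), measurable_layer].
    apply (ultralim_le U hU _ _ _ (Pt_spec _)); intros eps Heps.
    apply (uf_mono U hU (fun i => partition (fun _ => True) (fst i)));
      [intros i Hpart | apply U_partition].
    assert (Hfreq : forall x, freq (snd i) x (fun w => ~ layer (S n) (S n) w) <= 0).
    { intro x; eapply Rle_trans; [apply (freq_le_of_eventually_out _ _ _ 0) | simpl; lra].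
      intros m _ Hm; apply Hm, probe_layer, Nat.mod_upper_bound; lia. }
    pose proof (approx_le (fst i) (snd i) _ 0 (Rle_refl 0) Hfreq _ (measurable_full Sigma hS) Hpart);
      lra.
Qed.

Lemma strongly_nonatomic_Pt : strongly_nonatomic Sigma Pt.
Proof.
  apply (strongly_nonatomic_of_fine_chains Sigma Pt hS fa_probability_Pt Pt_fine_chains).
Qed.

End Limit.

End Construction.

Theorem theorem14 (X : Type) (d : X -> X -> R)
  (hd : is_metric d) (hsep : separable d)
  (htwo : exists x y : X, x <> y)
  (S : ((nat -> X) -> Prop) -> Prop)
  (hS : sigma_algebra S)
  (hopen : forall U, product_open d U -> S U)
  (P : ((nat -> X) -> Prop) -> R)
  (hP : fa_probability S P) :
  exists Pt : ((nat -> X) -> Prop) -> R,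
    fa_probability S Pt /\ strongly_nonatomic S Pt /\
    (forall U, product_open d U -> P U <= Pt U).
Proof.
  destruct htwo as [a [b hab]].
  destruct (UltrafilterLemma.ultrafilter_of_base _ (fine_base X S) (fine_base_nonempty X S)
    (fine_base_directed X S) (fine_base_proper X S hS)) as [U [hU U_base]].
  exists (Pt X a b P U); split; [|split].
  - exact (fa_probability_Pt X a b S hS P hP U hU U_base).
  - exact (strongly_nonatomic_Pt X d a b hd hab S hS hopen P hP U hU U_base).
  - intros V HV; exact (Pt_open_ge X d a b S hS hopen P hP U hU U_base V HV).
Qed.
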